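(* For any function $f:N\to L$ and any $L^+$-valued fuzzy measure $v$ on $N$, \[ \check{\mathcal{S}}_v(f) = \left[\mathop{\mathrm{SMax}}_{i=1}^p \left(f_{(i)}\mathbin{\mathrm{smin}} v(\{(1),\ldots,(i)\})\right)\right] \mathbin{\mathrm{smax}} \left[\mathop{\mathrm{SMax}}_{i=p+1}^n \left(f_{(i)}\mathbin{\mathrm{smin}} v(\{(i),\ldots,(n)\})\right)\right], \] where $(\cdot)$ is a permutation of $N$ such that $-\mathbf{1}\leq f_{(1)}\leq\cdots\leq f_{(p)}<\mathbf{0}\leq f_{(p+1)}\leq\cdots\leq f_{(n)}\leq \mathbf{1}$. Moreover, \begin{align*} \check{\mathcal{S}}_v(f) = & \left[\mathop{\mathrm{SMax}}_{A\subset N^+}\left(m(A) \mathbin{\mathrm{smin}}\Bigg[\bigwedge_{i\in A}f_i^+ \mathbin{\mathrm{smax}}\Big(- \bigwedge_{i\in A}f_i^-\Big) \Bigg] \right)\right]\mathbin{\mathrm{smax}}\\ & \left[\mathop{\mathrm{SMax}}_{A\subset N^-}\left(m(A) \mathbin{\mathrm{smin}}\Bigg[\bigwedge_{i\in A}f_i^+ \mathbin{\mathrm{smax}}\Big(- \bigwedge_{i\in A}f_i^-\Big) \Bigg] \right)\right]\mathbin{\mathrm{smax}}\\ & \left[\mathop{\mathrm{SMax}}_{A^+,A^-\neq\emptyset}\left(m(A) \mathbin{\mathrm{smin}}\Bigg[\bigwedge_{i\in A}f_i^+ \mathbin{\mathrm{smax}}\Big(- \bigwedge_{i\in A}f_i^-\Big)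 \Bigg] \right)\right], \end{align*} where $N^+:=\{i\in N\mid f_i\geq\mathbf{0}\}$, $N^-:=N\setminus N^+$, $A^+:=A\cap N^+$, $A^-:=A\cap N^-$, and $m$ is any function in the interval $[m_*,m^*]$ of Möbius transforms of $v$.
   Context: $L^+$ is a linearly ordered set with bottom $\mathbf{0}$ and top $\mathbf{1}$; $L^-:=\{-a\mid a\in L^+\}$ with reversed order ($-a\leq -b$ iff $a\geq b$), and $L:=L^+\cup L^-$ with $-\mathbf{0}$ identified with $\mathbf{0}$. $|a|=a$ if $a\in L^+$, $|a|=-a$ otherwise; $\mathrm{sign}$ takes values $-\mathbf{1},\mathbf{0},\mathbf{1}$ for $a<\mathbf{0}$, $a=\mathbf{0}$, $a>\mathbf{0}$. The symmetric maximum is $a\mathbin{\mathrm{smax}} b := -(|a|\vee|b|)$ if $b\neq -a$ and $|a|\vee|b|$ equals $-a$ or $-b$; $:=\mathbf{0}$ if $b=-a$; $:=|a|\vee|b|$ otherwise. The symmetric minimum is $a\mathbin{\mathrm{smin}} b := -(|a|\wedge|b|)$ if $\mathrm{sign}\,a\neq\mathrm{sign}\,b$, and $|a|\wedge|b|$ otherwise. $\mathop{\mathrm{SMax}}$ denotes the iterated symmetric maximum; it is unambiguous (associative) whenever all terms have the same sign, which is the case within each bracket above. $N=\{1,\ldots,n\}$; an $L^+$-valued fuzzy measure $v:\mathcal{P}(N)\to L^+$ satisfies $v(\emptyset)=\mathbf{0}$, $v(N)=\mathbf{1}$, and is monotone. The Sugeno integral of $g:N\to L^+$ is $\mathcal{S}_v(g)=\bigvee_{i=1}^n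 [g_{(i)}\wedge v(\{(i),\ldots,(n)\})]$ with $g_{(1)}\leq\cdots\leq g_{(n)}$. For $f:N\to L$, $f^+:=f\vee\mathbf{0}$, $f^-:=(-f)\vee\mathbf{0}$, and the symmetric Sugeno integral is defined by $\check{\mathcal{S}}_v(f)=\mathcal{S}_v(f^+)\mathbin{\mathrm{smax}}(-\mathcal{S}_v(f^-))$. The (ordinal) Möbius transforms of $v$ are the functions $m$ with $m_*\leq m\leq m^*$, where $m^*(A)=v(A)$ and $m_*(A)=v(A)$ if $v(A)>v(A\setminus\{j\})$ for all $j\in A$, and $m_*(A)=\mathbf{0}$ otherwise; for any such $m$, $\mathcal{S}_v(g)=\bigvee_{A\subset N}\big(\bigwedge_{i\in A}g_i\wedge m(A)\big)$. *)

From mathcomp Require Import all_boot all_order fingroup perm.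
Set Implicit Arguments. Unset Strict Implicit. Unset Printing Implicit Defensive.
Import Order.TTheory.
Local Open Scope order_scope.

Section SymL.
Context {d : Order.disp_t} {T : tbOrderType d}.

(* L = L^+ u L^-, with -0 identified with 0.  An element is a pair
   (neg, a) : "neg" is true for the element -a of L^-; the element -0 is
   not represented (it is 0). *)
Definition symL := {x : bool * T | x.1 ==> (x.2 != \bot)}.

Lemma mkL_proof (neg : bool) (a : T) :
  (neg && (a != \bot), a).1 ==> ((neg && (a != \bot), a).2 != \bot).
Proof. by case: neg => //=; case: (a != \bot). Qed.

Definition mkL (neg : bool) (a : T) : symL :=
  exist _ (neg && (a != \bot), a) (mkL_proof neg a).

Definition isnegL (x : symL) : bool := (val x).1.
Definition magL (x : symL) : T := (val x).2.

Definition posL (a : T) : symL := mkL false a.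
Definition zeroL : symL := posL \bot.
Definition oneL : symL := posL \top.
Definition oppL (x : symL) : symL := mkL (~~ isnegL x) (magL x).
Definition absL (x : symL) : symL := posL (magL x).

Definition leL (x y : symL) : bool :=
  match isnegL x, isnegL y with
  | true, true => magL y <= magL x
  | true, false => true
  | false, true => false
  | false, false => magL x <= magL y
  end.
Definition ltL (x y : symL) : bool := (x != y) && leL x y.
Definition maxL (x y : symL) : symL := if leL x y then y else x.

Definition sgnL (x : symL) : symL :=
  if ltL x zeroL then oppL oneL else if x == zeroL then zeroL else oneL.

Definition smax (a b : symL) : symL :=
  let m := posL (magL a `|` magL b) in
  if b == oppL a then zeroL
  else if (m == oppL a) || (m == oppL b) then oppL m
  else m.

Definition smin (a b : symL) : symL :=
  if sgnL a != sgnL b then oppL (posL (magL a `&` magL b))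
  else posL (magL a `&` magL b).

End SymL.

Arguments symL {d} T.

Section Sugeno.
Context {d : Order.disp_t} {T : tbOrderType d} {n : nat}.

Definition fuzzy_measure (v : {set 'I_n} -> T) : Prop :=
  [/\ v set0 = \bot, v setT = \top &
      forall A B : {set 'I_n}, A \subset B -> v A <= v B].

(* Sugeno integral: with (1),...,(n) the increasing rearrangement of g
   (here a fixed one, obtained by sorting), \join_i g_(i) /\ v({(i),...,(n)}) *)
Definition sugeno (v : {set 'I_n} -> T) (g : 'I_n -> T) : T :=
  let s := sort (fun i j => g i <= g j) (enum 'I_n) in
  \join_(i <- s) (g i `&` v [set x in drop (index i s) s]).

Definition fplus (f : 'I_n -> symL T) (i : 'I_n) : T := magL (maxL (f i) zeroL).
Definition fminus (f : 'I_n -> symL T) (i : 'I_n) : T :=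
  magL (maxL (oppL (f i)) zeroL).

Definition symSugeno (v : {set 'I_n} -> T) (f : 'I_n -> symL T) : symL T :=
  smax (posL (sugeno v (fplus f))) (oppL (posL (sugeno v (fminus f)))).

(* lower Moebius transform m_* (upper one is v itself) *)
Definition mob_low (v : {set 'I_n} -> T) (A : {set 'I_n}) : T :=
  if [forall j in A, v (A :\ j) < v A] then v A else \bot.

Definition mterm (m : {set 'I_n} -> T) (f : 'I_n -> symL T) (A : {set 'I_n})
  : symL T :=
  smin (posL (m A))
       (smax (posL (\meet_(i in A) fplus f i))
             (oppL (posL (\meet_(i in A) fminus f i)))).

Definition Npos (f : 'I_n -> symL T) : {set 'I_n} := [set i | leL zeroL (f i)].
Definition Nneg (f : 'I_n -> symL T) : {set 'I_n} := ~: Npos f.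

End Sugeno.

From mathcomp Require Import all_boot all_order fingroup perm.
From mathcomp Require Import zify.
Import Order.TTheory.
Local Open Scope order_scope.

(* On values of a common sign smax and smin are join and meet, so both formulas
   reduce to statements about the Sugeno integrals of f^+ and f^-.  The Sugeno
   integral of g is \join_A (v A /\ \meet_{i in A} g_i), since every A is
   dominated by the upper set of its g-least element.  Running the same argument
   along the permutation s gives the sorted form; as f^- decreases along s, the
   upper sets become the lower sets {(1),...,(i)}.  For the Moebius form, every A
   contains a B with v B = v A that is minimal for this property, so that
   m_*(B) = v(B); hence v may be replaced by any m in [m_*, v].  Finally, sets
   meeting both N^+ and N^- contribute 0, and the others pick out f^+ or f^-. *)

Section SymmetricScale.
Context {d : Order.disp_t} {T : tbOrderType d}.
Implicit Types (a b : T) (x y : symL T).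

Definition negL a : symL T := oppL (posL a).

Lemma isnegL_pos a : isnegL (posL a) = false. Proof. by []. Qed.
Lemma isnegL_neg a : isnegL (negL a) = (a != \bot). Proof. by []. Qed.
Lemma magL_pos a : magL (posL a) = a. Proof. by []. Qed.
Lemma magL_neg a : magL (negL a) = a. Proof. by []. Qed.

Lemma eqLE x y : (x == y) = (isnegL x == isnegL y) && (magL x == magL y).
Proof. by rewrite -val_eqE; case: x => [[? ?] ?]; case: y => [[? ?] ?]. Qed.

Lemma negL0 : negL \bot = zeroL.
Proof. by apply/eqP; rewrite eqLE isnegL_neg eqxx. Qed.

Lemma symL_case x : x = if isnegL x then negL (magL x) else posL (magL x).
Proof.
case: x => [[b a] H]; apply: val_inj; rewrite /isnegL /magL /=.
by case: b H => //= ->.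
Qed.

Lemma symL_ind (P : symL T -> Prop) :
  (forall a, P (posL a)) -> (forall a, a != \bot -> P (negL a)) -> forall x, P x.
Proof.
move=> Ppos Pneg [[[] a] /= Ha].
  have -> : exist _ (true, a) Ha = negL a by apply: val_inj; rewrite /= -[magL _]/a Ha.
  exact: Pneg.
by have -> : exist _ (false, a) Ha = posL a by apply: val_inj.
Qed.

Lemma oppLK : involutive (@oppL d T).
Proof.
case=> [[b a] H]; apply: val_inj; rewrite /oppL /isnegL /magL /=.
by case: b H => /= H; [rewrite H | case: (a != \bot)].
Qed.

Lemma oppL_neg a : oppL (negL a) = posL a. Proof. exact: oppLK. Qed.

Definition symLE :=
  (isnegL_pos, isnegL_neg, magL_pos, magL_neg, oppL_neg).

Lemma smax_pos_pos a b : smax (posL a) (posL b) = posL (a `|` b).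
Proof.
rewrite /smax -!/(negL _) !symLE !eqLE !symLE.
case: (eqVneq a \bot) => [->|ha]; case: (eqVneq b \bot) => [->|hb] /=.
all: rewrite ?joinxx ?join0x ?joinx0 ?(negPf ha) ?(negPf hb) //.
Qed.

Lemma smax_neg_neg a b : smax (negL a) (negL b) = negL (a `|` b).
Proof.
rewrite /smax !symLE !eqLE !symLE.
case: (eqVneq a \bot) => [->|ha]; case: (eqVneq b \bot) => [->|hb] /=;
  rewrite ?joinxx ?join0x ?joinx0 ?eqxx ?(negPf ha) ?(negPf hb) /= ?orbT ?negL0 //.
  by rewrite eq_sym (negPf ha).
by case: (leP a b) => _; rewrite eqxx ?orbT.
Qed.

Lemma smaxC : commutative (@smax d T).
Proof.
move=> x y; rewrite /smax joinC orbC; case: (eqVneq y (oppL x)) => [->|h].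
  by rewrite oppLK eqxx.
by case: (eqVneq x (oppL y)) => [e|//]; rewrite e oppLK eqxx in h.
Qed.

Lemma smaxx0 x : smax x zeroL = x.
Proof.
elim/symL_ind: x => a.
  by rewrite smax_pos_pos joinx0.
by rewrite -negL0 smax_neg_neg joinx0.
Qed.

Lemma big_smax_pos (I : Type) (r : seq I) (P : pred I) (F : I -> T) :
  \big[smax/zeroL]_(i <- r | P i) posL (F i) = posL (\join_(i <- r | P i) F i).
Proof. by elim/big_rec2: _ => // i y1 y2 _ ->; apply: smax_pos_pos. Qed.

Lemma big_smax_neg (I : Type) (r : seq I) (P : pred I) (F : I -> T) :
  \big[smax/zeroL]_(i <- r | P i) negL (F i) = negL (\join_(i <- r | P i) F i).
Proof.
elim/big_rec2: _ => [|i y1 y2 _ ->]; [by rewrite negL0 | exact: smax_neg_neg].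
Qed.

Lemma sgnL_pos a : sgnL (posL a) = if a == \bot then zeroL else oneL.
Proof.
rewrite /sgnL /ltL /leL !symLE lex0.
case: (eqVneq a \bot) => [->|h]; first by rewrite eqxx.
by rewrite andbF eqLE !symLE (negPf h) andbF.
Qed.

Lemma sgnL_neg a : a != \bot -> sgnL (negL a) = negL \top.
Proof.
by move=> h; rewrite /sgnL /ltL /leL !symLE h eqLE !symLE h.
Qed.

Lemma smin_pos_pos a b : smin (posL a) (posL b) = posL (a `&` b).
Proof.
rewrite /smin !sgnL_pos -/(negL _).
case: (eqVneq a \bot) => [->|ha]; case: (eqVneq b \bot) => [->|hb] //=;
  rewrite ?eqxx //= ?meet0x ?meetx0 ?negL0 //; by case: ifP.
Qed.

Lemma smin_neg_pos a b : smin (negL a) (posL b) = negL (a `&` b).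
Proof.
case: (eqVneq a \bot) => [->|ha].
  by rewrite negL0 smin_pos_pos meet0x negL0.
have htop : (\top : T) != \bot by apply: contra ha => /eqP e; rewrite -lex0 -e lex1.
rewrite /smin sgnL_neg // sgnL_pos -/(negL _) !symLE.
suff -> : negL \top != (if b == \bot then zeroL else oneL) by [].
by case: ifP => _; rewrite eqLE !symLE htop.
Qed.

Lemma sminC : commutative (@smin d T).
Proof. by move=> x y; rewrite /smin eq_sym meetC. Qed.

Lemma le0L x : leL zeroL x = ~~ isnegL x.
Proof. by rewrite /leL; case: (isnegL x) => //=; rewrite le0x. Qed.

Lemma ltL0 x : ltL x zeroL = isnegL x.
Proof.
elim/symL_ind: x => [a|a ha]; rewrite /ltL /leL !symLE.
  by rewrite lex0; case: (eqVneq a \bot) => [->|_]; rewrite ?eqxx ?andbF.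
by rewrite ha andbT eqLE !symLE ha.
Qed.

Definition pospart x : T := magL (maxL x zeroL).
Definition negpart x : T := magL (maxL (oppL x) zeroL).

Lemma pospart_pos a : pospart (posL a) = a.
Proof. by rewrite /pospart /maxL /leL !symLE; case: ifP; rewrite // lex0 => /eqP. Qed.

Lemma pospart_neg a : pospart (negL a) = \bot.
Proof.
case: (eqVneq a \bot) => [->|h]; first by rewrite negL0 pospart_pos.
by rewrite /pospart /maxL /leL !symLE h.
Qed.

Lemma negpart_pos a : negpart (posL a) = \bot. Proof. exact: pospart_neg. Qed.

Lemma negpart_neg a : negpart (negL a) = a.
Proof. by rewrite /negpart oppL_neg; apply: pospart_pos. Qed.

Lemma pospart_of_neg x : isnegL x -> pospart x = \bot.
Proof. by move=> x_neg; rewrite (symL_case x) x_neg pospart_neg. Qed.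

Lemma negpart_of_nonneg x : ~~ isnegL x -> negpart x = \bot.
Proof. by move=> x_pos; rewrite (symL_case x) (negPf x_pos) negpart_pos. Qed.

Lemma parts_monotone x y : leL x y -> pospart x <= pospart y /\ negpart y <= negpart x.
Proof.
elim/symL_ind: x => [a|a ha]; elim/symL_ind: y => [b|b hb];
  rewrite /leL !symLE ?ha ?hb ?pospart_pos ?pospart_neg ?negpart_pos ?negpart_neg //;
  by move=> *; split; rewrite ?le0x.
Qed.

Lemma fplusE n (f : 'I_n -> symL T) i : fplus f i = pospart (f i). Proof. by []. Qed.
Lemma fminusE n (f : 'I_n -> symL T) i : fminus f i = negpart (f i). Proof. by []. Qed.

End SymmetricScale.

Section SugenoSubsets.
Context {d : Order.disp_t} {T : tbLatticeType d} {n : nat}.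
Implicit Types (m v : {set 'I_n} -> T) (g : 'I_n -> T).

Definition sugeno_sets m g : T := \join_(A : {set 'I_n}) (m A `&` \meet_(i in A) g i).

Lemma sugeno_sets_rank v g (r : 'I_n -> nat) (P : pred 'I_n) :
  v set0 = \bot -> (forall A B : {set 'I_n}, A \subset B -> v A <= v B) ->
  {homo g : x y / (r x <= r y)%N >-> x <= y} ->
  (forall x, ~~ P x -> g x = \bot) ->
  sugeno_sets v g = \join_(x | P x) (g x `&` v [set y | (r x <= r y)%N]).
Proof.
move=> v0 vmon g_mono gP; apply/le_anti/andP; split.
- apply/joinsP => A _; case: (set_0Vmem A) => [->|[x0 x0A]].
    by rewrite v0 meet0x.
  have [x xA xmin] := arg_minnP r x0A.
  case Px: (P x).
  + apply: (joins_min (j := x)) => //; rewrite meetC; apply: leI2.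
      exact: meets_inf.
    by apply: vmon; apply/subsetP => y yA; rewrite inE xmin.
  + apply: le_trans (leIr _ _) _; apply: le_trans (meets_inf _ xA) _.
    by rewrite gP ?Px.
- apply/joinsP => x Px.
  apply: le_trans _ (joins_sup (j := [set y | (r x <= r y)%N]) _ isT).
  by rewrite meetC; apply: leI2 => //; apply/meetsP => y; rewrite inE => /g_mono.
Qed.

Lemma sugeno_sets_restrict m g (Q : {set 'I_n}) :
  (forall i, i \notin Q -> g i = \bot) ->
  sugeno_sets m g = \join_(A : {set 'I_n} | A \subset Q) (m A `&` \meet_(i in A) g i).
Proof.
move=> gQ; apply/le_anti/andP; split; last first.
  by apply/joinsP => A _; apply: (joins_sup (j := A)).
apply/joinsP => A _; case: (boolP (A \subset Q)) => [AQ|/subsetPn [i iA iQ]].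
  exact: (joins_sup (j := A)).
apply: le_trans (leIr _ _) _; apply: le_trans (meets_inf _ iA) _.
by rewrite gQ.
Qed.

End SugenoSubsets.

Lemma mem_drop_index (X : eqType) (s : seq X) (k : nat) (y : X) :
  uniq s -> y \in s -> (y \in drop k s) = (k <= index y s)%N.
Proof.
move=> us ys.
have : uniq (take k s ++ drop k s) by rewrite cat_take_drop.
rewrite cat_uniq => /and3P[_ disj _].
rewrite -[in index y s](cat_take_drop k s) index_cat size_take_min.
have [yt | yt] := boolP (y \in take k s).
  have yd : y \notin drop k s by apply: contra disj => yd; apply/hasP; exists y.
  have := index_mem y (take k s); rewrite yt size_take_min (negPf yd); lia.
have yd : y \in drop k s by move: ys; rewrite -{1}(cat_take_drop k s) mem_cat (negPf yt).
have ks : (k <= size s)%N.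
  by rewrite leqNgt; apply: contraL yd => /ltnW /drop_oversize ->; rewrite in_nil.
rewrite yd; lia.
Qed.

Section SugenoMeasure.
Context {d : Order.disp_t} {T : tbOrderType d} {n : nat} (v : {set 'I_n} -> T).
Hypothesis vmon : forall A B : {set 'I_n}, A \subset B -> v A <= v B.

Lemma mob_low_attained (A : {set 'I_n}) :
  exists2 B : {set 'I_n}, B \subset A & mob_low v B = v A.
Proof.
pose P (B : {set 'I_n}) := (B \subset A) && (v B == v A).
have PA : P A by rewrite /P subxx eqxx.
have [B /andP[BA /eqP vB] Bmin] := arg_minnP (fun B : {set 'I_n} => #|B|) PA.
exists B => //; rewrite /mob_low -vB; case: ifP => // /negP []; apply/forall_inP => j jB.
rewrite lt_def vmon ?subsetDl // andbT; apply/negP => /eqP e.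
have := Bmin (B :\ j); rewrite /P (subset_trans (subsetDl _ _) BA) -e vB eqxx.
by move=> /(_ isT); rewrite (cardsD1 j B) jB; lia.
Qed.

Lemma sugeno_sets_mobius (m : {set 'I_n} -> T) (g : 'I_n -> T) :
  (forall A, mob_low v A <= m A /\ m A <= v A) ->
  sugeno_sets m g = sugeno_sets v g.
Proof.
move=> hm; apply/le_anti/andP; split; apply/joinsP => A _.
  by apply: (joins_min (j := A)) => //; apply: leI2 => //; case: (hm A).
have [B BA mB] := mob_low_attained A.
apply: (joins_min (j := B)) => //; apply: leI2; last exact: le_meets.
by rewrite -mB; case: (hm B).
Qed.

Hypothesis v0 : v set0 = \bot.

Lemma sugenoE (g : 'I_n -> T) : sugeno v g = sugeno_sets v g.
Proof.
rewrite /sugeno; set s := sort _ _.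
have us : uniq s by rewrite sort_uniq enum_uniq.
have ms x : x \in s by rewrite mem_sort mem_enum.
have sorted_s : sorted (fun i j => g i <= g j) s.
  by apply: sort_sorted => x y; apply: le_total.
rewrite (sugeno_sets_rank v g (index^~ s) predT v0 vmon) //; last first.
  move=> x y hxy; rewrite -(nth_index x (ms x)) -(nth_index x (ms y)).
  have le_g_trans : transitive (fun i j => g i <= g j) by move=> ? ? ?; apply: le_trans.
  have le_g_refl : reflexive (fun i j => g i <= g j) by move=> ?; apply: lexx.
  by apply: (sorted_leq_nth le_g_trans le_g_refl x sorted_s); rewrite ?inE ?index_mem.
rewrite joins_seq; apply: eq_big => [i | i _]; first by rewrite ms.
by congr (_ `&` v _); apply/setP => y; rewrite !inE mem_drop_index.
Qed.

End SugenoMeasure.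

Section SortedForm.
Context {d : Order.disp_t} {T : tbOrderType d} {n : nat} (v : {set 'I_n} -> T).
Hypothesis v0 : v set0 = \bot.
Hypothesis vmon : forall A B : {set 'I_n}, A \subset B -> v A <= v B.
Variables (f : 'I_n -> symL T) (s : {perm 'I_n}) (p : nat).
Hypothesis f_sorted : forall i j : 'I_n, (i <= j)%N -> leL (f (s i)) (f (s j)).
Hypothesis f_sign : forall i : 'I_n, (i < p)%N = ltL (f (s i)) zeroL.

Lemma isnegL_sorted x : isnegL (f x) = ((s^-1)%g x < p)%N.
Proof. by rewrite f_sign permKV ltL0. Qed.

Lemma sugeno_fminus_sorted :
  sugeno v (fminus f) =
  \join_(k < n | (k < p)%N) (fminus f (s k) `&` v [set s j | j : 'I_n & (j <= k)%N]).
Proof.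
(* f^- decreases along s: reversing the rank turns upper sets into lower sets. *)
rewrite sugenoE // (sugeno_sets_rank v _ (fun x => n - (s^-1)%g x)%N
                                          (fun x => (s^-1)%g x < p)%N v0 vmon).
- rewrite (reindex_inj (@perm_inj _ s)); apply: eq_big => k; rewrite permK // => _.
  congr (_ `&` v _); apply/setP => y; rewrite (can_imset_pre _ (permK s)) !inE.
  by have := ltn_ord k; have := ltn_ord ((s^-1)%g y); lia.
- move=> x y le_xy; rewrite !fminusE.
  have : ((s^-1)%g y <= (s^-1)%g x)%N.
    by have := ltn_ord ((s^-1)%g x); have := ltn_ord ((s^-1)%g y); lia.
  by move/f_sorted; rewrite !permKV => /parts_monotone [].
- by move=> x x_pos; rewrite fminusE negpart_of_nonneg // isnegL_sorted.
Qed.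

Lemma sugeno_fplus_sorted :
  sugeno v (fplus f) =
  \join_(k < n | (p <= k)%N) (fplus f (s k) `&` v [set s j | j : 'I_n & (k <= j)%N]).
Proof.
rewrite sugenoE // (sugeno_sets_rank v _ (fun x => (s^-1)%g x : nat)
                                          (fun x => p <= (s^-1)%g x)%N v0 vmon).
- rewrite (reindex_inj (@perm_inj _ s)); apply: eq_big => k; rewrite permK // => _.
  by congr (_ `&` v _); apply/setP => y; rewrite (can_imset_pre _ (permK s)) !inE.
- move=> x y /f_sorted le_fxy; rewrite !permKV in le_fxy.
  by rewrite !fplusE; case: (parts_monotone _ _ le_fxy).
- by move=> x x_neg; rewrite fplusE pospart_of_neg // isnegL_sorted ltnNge.
Qed.

Lemma symSugeno_sorted :
  symSugeno v f =
  smax (\big[smax/zeroL]_(k < n | (k < p)%N)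
          smin (f (s k)) (posL (v [set s j | j : 'I_n & (j <= k)%N])))
       (\big[smax/zeroL]_(k < n | (p <= k)%N)
          smin (f (s k)) (posL (v [set s j | j : 'I_n & (k <= j)%N]))).
Proof.
rewrite /symSugeno -/(negL _) sugeno_fminus_sorted sugeno_fplus_sorted.
rewrite -big_smax_neg -big_smax_pos smaxC.
congr smax; apply: eq_bigr => k k_p.
  have k_neg : isnegL (f (s k)) by rewrite -ltL0 -f_sign.
  by rewrite fminusE (symL_case (f (s k))) k_neg smin_neg_pos negpart_neg.
have k_pos : isnegL (f (s k)) = false by rewrite -ltL0 -f_sign ltnNge k_p.
by rewrite fplusE (symL_case (f (s k))) k_pos smin_pos_pos pospart_pos.
Qed.

End SortedForm.

Section MobiusTerms.
Context {d : Order.disp_t} {T : tbOrderType d} {n : nat}.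
Variables (f : 'I_n -> symL T) (m : {set 'I_n} -> T).
Hypothesis m0 : m set0 = \bot.

Lemma in_Npos i : (i \in Npos f) = ~~ isnegL (f i).
Proof. by rewrite inE le0L. Qed.

Lemma in_Nneg i : (i \in Nneg f) = isnegL (f i).
Proof. by rewrite inE in_Npos negbK. Qed.

Lemma meet_fplus_neg {A : {set 'I_n}} {x} :
  x \in A -> isnegL (f x) -> \meet_(i in A) fplus f i = \bot.
Proof.
move=> xA x_neg; apply/eqP; rewrite -lex0; apply: le_trans (meets_inf _ xA) _.
by rewrite fplusE pospart_of_neg.
Qed.

Lemma meet_fminus_pos {A : {set 'I_n}} {x} :
  x \in A -> ~~ isnegL (f x) -> \meet_(i in A) fminus f i = \bot.
Proof.
move=> xA x_pos; apply/eqP; rewrite -lex0; apply: le_trans (meets_inf _ xA) _.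
by rewrite fminusE negpart_of_nonneg.
Qed.

Lemma mterm_set0 : mterm m f set0 = zeroL.
Proof. by rewrite /mterm !big_set0 /smax eqxx smin_pos_pos m0 meet0x. Qed.

Lemma mterm_Npos (A : {set 'I_n}) : A \subset Npos f ->
  mterm m f A = posL (m A `&` \meet_(i in A) fplus f i).
Proof.
have [->|[x xA] AN] := set_0Vmem A; first by rewrite mterm_set0 m0 meet0x.
have x_pos : ~~ isnegL (f x) by rewrite -in_Npos (subsetP AN).
by rewrite /mterm (meet_fminus_pos xA x_pos) -/(negL _) negL0 smaxx0 smin_pos_pos.
Qed.

Lemma mterm_Nneg (A : {set 'I_n}) : A \subset Nneg f ->
  mterm m f A = negL (m A `&` \meet_(i in A) fminus f i).
Proof.
have [->|[x xA] AN] := set_0Vmem A; first by rewrite mterm_set0 m0 meet0x negL0.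
have x_neg : isnegL (f x) by rewrite -in_Nneg (subsetP AN).
rewrite /mterm (meet_fplus_neg xA x_neg) -/(negL _) -/zeroL smaxC smaxx0.
by rewrite sminC smin_neg_pos meetC.
Qed.

Lemma mterm_mixed (A : {set 'I_n}) :
  (A :&: Npos f != set0) && (A :&: Nneg f != set0) -> mterm m f A = zeroL.
Proof.
case/andP=> /set0Pn [x] + /set0Pn [y]; rewrite !inE !le0L negbK.
move=> /andP[xA x_pos] /andP[yA y_neg].
rewrite /mterm (meet_fplus_neg yA y_neg) (meet_fminus_pos xA x_pos) -/(negL _) negL0.
by rewrite smaxx0 smin_pos_pos meetx0.
Qed.

End MobiusTerms.

Lemma symSugeno_mobius {d : Order.disp_t} {T : tbOrderType d} {n : nat}
    (v m : {set 'I_n} -> T) (f : 'I_n -> symL T) :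
  v set0 = \bot -> (forall A B : {set 'I_n}, A \subset B -> v A <= v B) ->
  (forall A : {set 'I_n}, mob_low v A <= m A /\ m A <= v A) ->
  symSugeno v f =
  smax (smax (\big[smax/zeroL]_(A : {set 'I_n} | A \subset Npos f) mterm m f A)
             (\big[smax/zeroL]_(A : {set 'I_n} | A \subset Nneg f) mterm m f A))
       (\big[smax/zeroL]_(A : {set 'I_n} | (A :&: Npos f != set0)
                                          && (A :&: Nneg f != set0)) mterm m f A).
Proof.
move=> v0 vmon hm.
have m0 : m set0 = \bot by apply/eqP; rewrite -lex0 -v0; case: (hm set0).
have -> : \big[smax/zeroL]_(A : {set 'I_n} | (A :&: Npos f != set0)
                                          && (A :&: Nneg f != set0)) mterm m f A = zeroL.
  by elim/big_ind: _ => // [x y -> ->|]; [exact: smaxx0 | exact: mterm_mixed].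
rewrite smaxx0 (eq_bigr _ (mterm_Npos f m m0)).
rewrite [X in smax _ X](eq_bigr _ (mterm_Nneg f m m0)).
rewrite big_smax_pos big_smax_neg /symSugeno -/(negL _) !sugenoE //.
rewrite -!(sugeno_sets_mobius v vmon m _ hm).
rewrite -!sugeno_sets_restrict // => i.
  by rewrite in_Nneg => /negpart_of_nonneg.
by rewrite in_Npos negbK => /pospart_of_neg.
Qed.

Theorem proposition4 (d : Order.disp_t) (T : tbOrderType d) (n : nat)
  (v : {set 'I_n} -> T) (f : 'I_n -> symL T) :
  fuzzy_measure v ->
  (forall (s : {perm 'I_n}) (p : nat),
     (p <= n)%N ->
     (forall i j : 'I_n, (i <= j)%N -> leL (f (s i)) (f (s j))) ->
     (forall i : 'I_n, (i < p)%N = ltL (f (s i)) zeroL) ->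
     symSugeno v f =
       smax
         (\big[smax/zeroL]_(k < n | (k < p)%N)
             smin (f (s k)) (posL (v [set s j | j : 'I_n & (j <= k)%N])))
         (\big[smax/zeroL]_(k < n | (p <= k)%N)
             smin (f (s k)) (posL (v [set s j | j : 'I_n & (k <= j)%N]))))
  /\
  (forall m : {set 'I_n} -> T,
     (forall A : {set 'I_n}, mob_low v A <= m A /\ m A <= v A) ->
     symSugeno v f =
       smax
         (smax
            (\big[smax/zeroL]_(A : {set 'I_n} | A \subset Npos f) mterm m f A)
            (\big[smax/zeroL]_(A : {set 'I_n} | A \subset Nneg f) mterm m f A))
         (\big[smax/zeroL]_(A : {set 'I_n} | (A :&: Npos f != set0)
                                            && (A :&: Nneg f != set0))
             mterm m f A)).
Proof.
case=> v0 _ vmon; split.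
- by move=> s p _ f_sorted f_sign; apply: symSugeno_sorted.
- by move=> m; apply: symSugeno_mobius.
Qed.
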